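(* Let $\gamma, \gamma_1$ be disjoint geodesics in $\mathbb{H}^3$ with common orthogonal $\eta$, and let their complex distance be $d_{\mathbb{C}}(\gamma,\gamma_1) = d + i\theta$, where $d>0$ is the length of $\eta$ and $\theta$ is a real representative of the angle, with $\theta \le \pi/2$. Let $P$ be the plane containing $\gamma$ and $\eta$. Let $y_1$ be a point of $\gamma_1$ and let $P_1$ be the plane containing $\gamma$ and $y_1$. Then the dihedral angle between $P$ and $P_1$ is at most $|\theta|/d$.
   Context: The complex distance $d+i\theta$ between two disjoint geodesics with common orthogonal $\eta$ has real part the length of $\eta$ and imaginary part the angle between $\gamma_1$ and the parallel transport along $\eta$ of the tangent direction of $\gamma$. *)

(* hyperboloid model of H^3 inside Minkowski space R^{1,3}. *)
From Stdlib Require Import Reals.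
Open Scope R_scope.

Record vec4 := V4 { c0 : R; c1 : R; c2 : R; c3 : R }.

Definition vadd (a b : vec4) : vec4 :=
  V4 (c0 a + c0 b) (c1 a + c1 b) (c2 a + c2 b) (c3 a + c3 b).
Definition vscale (k : R) (a : vec4) : vec4 :=
  V4 (k * c0 a) (k * c1 a) (k * c2 a) (k * c3 a).

Definition mdot (a b : vec4) : R :=
  - c0 a * c0 b + c1 a * c1 b + c2 a * c2 b + c3 a * c3 b.

Definition inH3 (x : vec4) : Prop := mdot x x = -1 /\ 0 < c0 x.

Definition unit_tangent (p v : vec4) : Prop :=
  inH3 p /\ mdot p v = 0 /\ mdot v v = 1.

Definition geod (p v : vec4) (t : R) : vec4 :=
  vadd (vscale (cosh t) p) (vscale (sinh t) v).
Definition geod_vel (p v : vec4) (t : R) : vec4 :=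
  vadd (vscale (sinh t) p) (vscale (cosh t) v).

Definition geodesic_set (p v : vec4) (x : vec4) : Prop :=
  exists t : R, x = geod p v t.

Definition is_geodesic (G : vec4 -> Prop) : Prop :=
  exists p v, unit_tangent p v /\ forall x, G x <-> geodesic_set p v x.

Definition direction_of (G : vec4 -> Prop) (x u : vec4) : Prop :=
  unit_tangent x u /\ forall y, G y <-> geodesic_set x u y.

(* Parallel transport of a tangent vector w at p along the geodesic
   s |-> geod p v s, from time 0 to time s (Levi-Civita transport in the
   hyperboloid model: the component along v is carried to the velocity,
   the component orthogonal to p and v is constant). *)
Definition ptransport (p v : vec4) (s : R) (w : vec4) : vec4 :=
  vadd w (vscale (mdot w v)
           (vadd (vscale (sinh s) p) (vscale (cosh s - 1) v))).

Definition normal_of (P : vec4 -> Prop) (n : vec4) : Prop :=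
  mdot n n = 1 /\ forall x, P x <-> (inH3 x /\ mdot x n = 0).

Definition is_plane (P : vec4 -> Prop) : Prop := exists n, normal_of P n.

Definition dihedral_angle (n n1 : vec4) : R := acos (Rabs (mdot n n1)).

From Stdlib Require Import Reals Lra.
Open Scope R_scope.

(* Complete the orthonormal frame (p, v, u) given by gamma and eta at p with the
   unit normal n of P.  The normal n1 of P1 is orthogonal to p and u, so
   n1 = b v + a n with b^2 + a^2 = 1 and |a| the cosine of the dihedral angle
   phi.  Parallel transport along eta fixes u, and the direction u1 of gamma_1
   at q = eta(d) is orthogonal to p and v, so u1 = cos theta u + c n with
   c^2 = sin^2 theta.  Writing y1 = cosh s q + sinh s u1, the equation
   <y1, n1> = 0 reads cosh s sinh d b + sinh s c a = 0, whence
   tan phi <= |sin theta| / sinh d <= |theta| / d, and phi <= tan phi. *)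

Lemma mdot_comm a b : mdot a b = mdot b a.
Proof. unfold mdot; ring. Qed.

Lemma mdot_vaddr a b x : mdot x (vadd a b) = mdot x a + mdot x b.
Proof. unfold mdot, vadd; simpl; ring. Qed.

Lemma mdot_vscaler k a x : mdot x (vscale k a) = k * mdot x a.
Proof. unfold mdot, vscale; simpl; ring. Qed.

Lemma mdot_geodl p v t z :
  mdot (geod p v t) z = cosh t * mdot p z + sinh t * mdot v z.
Proof. unfold mdot, geod, vadd, vscale; simpl; ring. Qed.

Lemma mdot_geod_vell p v t z :
  mdot (geod_vel p v t) z = sinh t * mdot p z + cosh t * mdot v z.
Proof. unfold mdot, geod_vel, vadd, vscale; simpl; ring. Qed.

Lemma ptransport_orthogonal p v s w : mdot w v = 0 -> ptransport p v s w = w.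
Proof.
  intros Hwv; unfold ptransport; rewrite Hwv.
  destruct w; unfold vadd, vscale; simpl; f_equal; ring.
Qed.

Definition det3 (a1 a2 a3 b1 b2 b3 e1 e2 e3 : R) : R :=
  a1 * (b2 * e3 - b3 * e2) - a2 * (b1 * e3 - b3 * e1) + a3 * (b1 * e2 - b2 * e1).

Definition det4 (a b c d : vec4) : R :=
    c0 a * det3 (c1 b) (c2 b) (c3 b) (c1 c) (c2 c) (c3 c) (c1 d) (c2 d) (c3 d)
  - c1 a * det3 (c0 b) (c2 b) (c3 b) (c0 c) (c2 c) (c3 c) (c0 d) (c2 d) (c3 d)
  + c2 a * det3 (c0 b) (c1 b) (c3 b) (c0 c) (c1 c) (c3 c) (c0 d) (c1 d) (c3 d)
  - c3 a * det3 (c0 b) (c1 b) (c2 b) (c0 c) (c1 c) (c2 c) (c0 d) (c1 d) (c2 d).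

Definition gram_row (a b c d x : vec4) : vec4 :=
  V4 (mdot x a) (mdot x b) (mdot x c) (mdot x d).

(* The Gram matrix is M J M^T with J = diag(-1, 1, 1, 1). *)
Lemma det4_gram a b c d :
  det4 (gram_row a b c d a) (gram_row a b c d b)
       (gram_row a b c d c) (gram_row a b c d d) = - det4 a b c d ^ 2.
Proof. destruct a, b, c, d; unfold det4, det3, gram_row, mdot; simpl; ring. Qed.

Lemma det4_cramer a b c d e x :
  mdot a x * det4 e b c d + mdot b x * det4 a e c d
  + mdot c x * det4 a b e d + mdot d x * det4 a b c e = det4 a b c d * mdot e x.
Proof. destruct a, b, c, d, e, x; unfold det4, det3, mdot; simpl; ring. Qed.

Definition orthonormal_frame (e0 e1 e2 e3 : vec4) : Prop :=
  mdot e0 e0 = -1 /\ mdot e1 e1 = 1 /\ mdot e2 e2 = 1 /\ mdot e3 e3 = 1 /\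
  mdot e0 e1 = 0 /\ mdot e0 e2 = 0 /\ mdot e0 e3 = 0 /\
  mdot e1 e2 = 0 /\ mdot e1 e3 = 0 /\ mdot e2 e3 = 0.

Section OrthonormalFrame.

Variables e0 e1 e2 e3 : vec4.
Hypothesis frame : orthonormal_frame e0 e1 e2 e3.

Lemma det4_frame_neq0 : det4 e0 e1 e2 e3 <> 0.
Proof.
  destruct frame as (H00 & H11 & H22 & H33 & H01 & H02 & H03 & H12 & H13 & H23).
  pose proof (det4_gram e0 e1 e2 e3) as Hgram; unfold gram_row in Hgram.
  rewrite (mdot_comm e1 e0), (mdot_comm e2 e0), (mdot_comm e3 e0),
    (mdot_comm e2 e1), (mdot_comm e3 e1), (mdot_comm e3 e2),
    H00, H11, H22, H33, H01, H02, H03, H12, H13, H23 in Hgram.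
  unfold det4 at 1 in Hgram; unfold det3 in Hgram; simpl in Hgram.
  intros Hdet; rewrite Hdet in Hgram; lra.
Qed.

Lemma frame_orthogonal_null w :
  mdot e0 w = 0 -> mdot e1 w = 0 -> mdot e2 w = 0 -> mdot e3 w = 0 ->
  forall z, mdot z w = 0.
Proof.
  intros H0 H1 H2 H3 z.
  pose proof (det4_cramer e0 e1 e2 e3 z w) as Hcramer.
  rewrite H0, H1, H2, H3 in Hcramer.
  destruct (Rmult_integral (det4 e0 e1 e2 e3) (mdot z w)) as [Hdet | Hzw];
    [lra | contradiction det4_frame_neq0 | exact Hzw].
Qed.

Lemma mdot_frame_expansion x z :
  mdot z x = - mdot z e0 * mdot e0 x + mdot z e1 * mdot e1 x
             + mdot z e2 * mdot e2 x + mdot z e3 * mdot e3 x.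
Proof.
  destruct frame as (H00 & H11 & H22 & H33 & H01 & H02 & H03 & H12 & H13 & H23).
  set (w := vadd x (vadd (vscale (mdot e0 x) e0) (vadd (vscale (- mdot e1 x) e1)
              (vadd (vscale (- mdot e2 x) e2) (vscale (- mdot e3 x) e3))))).
  assert (Hw : forall y, mdot y w = mdot y x + mdot e0 x * mdot y e0
             - mdot e1 x * mdot y e1 - mdot e2 x * mdot y e2 - mdot e3 x * mdot y e3).
  { intros y; unfold w; rewrite !mdot_vaddr, !mdot_vscaler; ring. }
  assert (Hnull := frame_orthogonal_null w).
  rewrite !Hw, (mdot_comm e1 e0), (mdot_comm e2 e0), (mdot_comm e3 e0),
    (mdot_comm e2 e1), (mdot_comm e3 e1), (mdot_comm e3 e2),
    H00, H11, H22, H33, H01, H02, H03, H12, H13, H23 in Hnull.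
  specialize (Hnull ltac:(ring) ltac:(ring) ltac:(ring) ltac:(ring) z).
  rewrite Hw in Hnull; lra.
Qed.

End OrthonormalFrame.

Lemma cosh_sinh_sq t : cosh t ^ 2 - sinh t ^ 2 = 1.
Proof.
  unfold cosh, sinh.
  assert (Hexp : exp t * exp (- t) = 1)
    by (rewrite <- exp_plus, Rplus_opp_r; apply exp_0).
  nra.
Qed.

Lemma cosh_pos t : 0 < cosh t.
Proof. unfold cosh; pose proof (exp_pos t); pose proof (exp_pos (- t)); lra. Qed.

Lemma cosh_ge_1 t : 1 <= cosh t.
Proof. pose proof (cosh_sinh_sq t); pose proof (cosh_pos t); nra. Qed.

Lemma sinh_pos t : 0 < t -> 0 < sinh t.
Proof. intros Ht; rewrite <- sinh_0; now apply sinh_lt. Qed.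

Lemma sinh_ge_id t : 0 <= t -> t <= sinh t.
Proof.
  intros Ht.
  assert (Hder : forall x, derivable_pt_lim (fun x => sinh x - x) x (cosh x - 1))
    by (intros x; apply (derivable_pt_lim_minus sinh id), derivable_pt_lim_id;
        apply derivable_pt_lim_sinh).
  assert (Hinc : increasing (fun x => sinh x - x)).
  { apply (nonneg_derivative_1 _ (fun x => exist _ _ (Hder x))); intros x.
    rewrite (derive_pt_eq_0 _ x (cosh x - 1) _ (Hder x)).
    pose proof (cosh_ge_1 x); lra. }
  specialize (Hinc 0 t Ht); simpl in Hinc; rewrite sinh_0 in Hinc; lra.
Qed.

Lemma sin_sq_le_sq x : sin x ^ 2 <= x ^ 2.
Proof.
  assert (Hpos : forall y, 0 < y -> sin y ^ 2 <= y ^ 2).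
  { intros y Hy; pose proof (sin_lt_x y Hy); pose proof (SIN_bound y).
    destruct (Rle_lt_dec 1 y); [nra |].
    pose proof (sin_ge_0 y); pose proof PI2_1; nra. }
  destruct (Rtotal_order x 0) as [Hx | [-> | Hx]].
  - pose proof (Hpos (- x)); rewrite sin_neg in *; nra.
  - rewrite sin_0; lra.
  - now apply Hpos.
Qed.

(* Taylor bounds of order 3 for sin and 4 for cos suffice since x <= 2. *)
Lemma x_cos_le_sin x : 0 <= x -> x <= PI / 2 -> x * cos x <= sin x.
Proof.
  intros Hx0 Hx1; pose proof PI_4.
  destruct (sin_bound x 0 Hx0) as [Hsin _]; [lra |].
  destruct (cos_bound x 0) as [_ Hcos]; [lra | lra |].
  unfold sin_approx, cos_approx, sin_term, cos_term in *; simpl in Hsin, Hcos.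
  assert (Hcos' : cos x <= 1 - x ^ 2 / 2 + x ^ 4 / 24)
    by (eapply Rle_trans; [exact Hcos | right; field]).
  assert (Hsin' : x - x ^ 3 / 6 <= sin x)
    by (eapply Rle_trans; [right | exact Hsin]; field).
  assert (x * cos x <= x * (1 - x ^ 2 / 2 + x ^ 4 / 24))
    by (apply Rmult_le_compat_l; lra).
  assert (0 <= x ^ 3) by (apply pow_le; lra).
  assert (x ^ 2 <= 4) by nra.
  assert (x ^ 5 <= 4 * x ^ 3) by (replace (x ^ 5) with (x ^ 3 * x ^ 2) by ring; nra).
  nra.
Qed.

Lemma acos_le_of_tan_le a x :
  0 <= a <= 1 -> 0 <= x -> 1 - a ^ 2 <= x ^ 2 * a ^ 2 -> acos a <= x.
Proof.
  intros Ha Hx Htan.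
  set (phi := acos a).
  assert (Hphi : 0 <= phi <= PI) by apply acos_bound.
  assert (Hcos : cos phi = a) by (apply cos_acos; lra).
  assert (Ha0 : 0 < a) by (destruct (Req_dec a 0) as [-> |]; lra).
  assert (Hphi2 : phi <= PI / 2).
  { destruct (Rle_lt_dec phi (PI / 2)) as [| Hlt]; [assumption |].
    pose proof (cos_lt_0 phi Hlt ltac:(lra)); lra. }
  assert (Hsin0 : 0 <= sin phi) by (apply sin_ge_0; lra).
  assert (Hsin2 : sin phi ^ 2 = 1 - a ^ 2)
    by (pose proof (sin2_cos2 phi) as H; unfold Rsqr in H; rewrite <- Hcos; lra).
  assert (Hsin : sin phi <= x * a)
    by (apply Rsqr_incr_0; unfold Rsqr; nra).
  pose proof (x_cos_le_sin phi ltac:(lra) Hphi2); nra.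
Qed.

Lemma normal_orthogonal P n x : normal_of P n -> P x -> mdot x n = 0.
Proof. intros [_ HP] Hx; apply (HP x), Hx. Qed.

Lemma normal_orthogonal_direction P n p w t :
  normal_of P n -> P p -> P (geod p w t) -> 0 < t -> mdot w n = 0.
Proof.
  intros Hn Hp Hpw Ht.
  pose proof (normal_orthogonal P n _ Hn Hpw) as Hw.
  rewrite mdot_geodl, (normal_orthogonal P n p Hn Hp) in Hw.
  pose proof (sinh_pos t Ht); nra.
Qed.

Lemma orthogonal_geod_and_vel p v t w :
  mdot (geod p v t) w = 0 -> mdot (geod_vel p v t) w = 0 ->
  mdot p w = 0 /\ mdot v w = 0.
Proof.
  rewrite mdot_geodl, mdot_geod_vell; intros Hpos Hvel.
  (* the system has determinant cosh^2 t - sinh^2 t = 1 *)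
  rewrite <- (Rmult_1_l (mdot p w)), <- (Rmult_1_l (mdot v w)), <- (cosh_sinh_sq t).
  replace ((cosh t ^ 2 - sinh t ^ 2) * mdot p w) with
    (cosh t * (cosh t * mdot p w + sinh t * mdot v w)
     - sinh t * (sinh t * mdot p w + cosh t * mdot v w)) by ring.
  replace ((cosh t ^ 2 - sinh t ^ 2) * mdot v w) with
    (cosh t * (sinh t * mdot p w + cosh t * mdot v w)
     - sinh t * (cosh t * mdot p w + sinh t * mdot v w)) by ring.
  rewrite Hpos, Hvel; split; ring.
Qed.

Lemma dihedral_bound a b c s d theta :
  0 < d -> b ^ 2 + a ^ 2 = 1 -> cos theta ^ 2 + c ^ 2 = 1 ->
  cosh s * sinh d * b + sinh s * c * a = 0 ->
  acos (Rabs a) <= Rabs theta / d.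
Proof.
  intros Hd Hab Hc Hy.
  assert (Hc2 : c ^ 2 = sin theta ^ 2)
    by (pose proof (sin2_cos2 theta) as H; unfold Rsqr in H; lra).
  assert (Htan_sinh : b ^ 2 * sinh d ^ 2 <= c ^ 2 * a ^ 2).
  { assert (Hsq : cosh s ^ 2 * (b ^ 2 * sinh d ^ 2) = sinh s ^ 2 * (c ^ 2 * a ^ 2))
      by (replace (sinh s ^ 2 * (c ^ 2 * a ^ 2)) with ((sinh s * c * a) ^ 2) by ring;
          replace (sinh s * c * a) with (- (cosh s * sinh d * b)) by lra; ring).
    pose proof (cosh_sinh_sq s); pose proof (cosh_pos s).
    assert (0 <= c ^ 2 * a ^ 2) by nra.
    nra. }
  assert (Htan : b ^ 2 * d ^ 2 <= theta ^ 2 * a ^ 2).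
  { pose proof (sinh_ge_id d ltac:(lra)); pose proof (sin_sq_le_sq theta).
    assert (b ^ 2 * d ^ 2 <= b ^ 2 * sinh d ^ 2)
      by (apply Rmult_le_compat_l; [apply pow2_ge_0 | apply pow_incr; lra]).
    assert (sin theta ^ 2 * a ^ 2 <= theta ^ 2 * a ^ 2)
      by (apply Rmult_le_compat_r; [apply pow2_ge_0 | assumption]).
    rewrite Hc2 in Htan_sinh; lra. }
  apply acos_le_of_tan_le.
  - split; [apply Rabs_pos |].
    rewrite <- Rabs_R1; apply Rsqr_le_abs_0; unfold Rsqr; nra.
  - apply Rmult_le_pos; [apply Rabs_pos | left; apply Rinv_0_lt_compat, Hd].
  - rewrite pow2_abs, <- Hab, Rplus_minus_r.
    replace ((Rabs theta / d) ^ 2) with (theta ^ 2 / d ^ 2)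
      by (unfold Rdiv; rewrite <- (pow2_abs theta); field; lra).
    apply Rmult_le_reg_r with (d ^ 2); [nra |].
    replace (theta ^ 2 / d ^ 2 * a ^ 2 * d ^ 2) with (theta ^ 2 * a ^ 2) by (field; lra).
    exact Htan.
Qed.

Theorem lemma4p5
  (G G1 : vec4 -> Prop)          (* the geodesics gamma, gamma_1 *)
  (p v : vec4) (d : R)           (* eta : s |-> geod p v s, s in [0,d] *)
  (u u1 : vec4) (theta : R)
  (P P1 : vec4 -> Prop) (y1 : vec4) :
  is_geodesic G -> is_geodesic G1 ->
  (forall x, G x -> ~ G1 x) ->
  (* eta is the common orthogonal, from p on gamma to q = geod p v d on gamma_1 *)
  unit_tangent p v -> 0 < d ->
  G p -> G1 (geod p v d) ->
  direction_of G p u -> direction_of G1 (geod p v d) u1 ->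
  mdot u v = 0 -> mdot u1 (geod_vel p v d) = 0 ->
  (* theta is a real representative of the angle between gamma_1 and the
     parallel transport along eta of the direction of gamma *)
  cos theta = mdot (ptransport p v d u) u1 -> theta <= PI / 2 ->
  (* P : the plane containing gamma and eta *)
  is_plane P -> (forall x, G x -> P x) ->
  (forall s, 0 <= s <= d -> P (geod p v s)) ->
  (* P1 : the plane containing gamma and y1 in gamma_1 *)
  G1 y1 -> is_plane P1 -> (forall x, G x -> P1 x) -> P1 y1 ->
  forall n n1, normal_of P n -> normal_of P1 n1 ->
  dihedral_angle n n1 <= Rabs theta / d.
Proof.
  intros _ _ _ [[Hpp _] [Hpv Hvv]] Hd HGp _ [[_ [Hpu Huu]] HGu]
    [[_ [Hqu1 Hu1u1]] HG1u1] Huv Hu1vel Hcos _ _ HGP HetaP HG1y1 _ HGP1 HP1y1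
    n n1 Hn Hn1.
  assert (HGu1 : G (geod p u 1)) by (apply HGu; exists 1; reflexivity).
  assert (Hpn := normal_orthogonal P n p Hn (HGP p HGp)).
  assert (Hun := normal_orthogonal_direction P n p u 1 Hn (HGP p HGp)
                   (HGP _ HGu1) Rlt_0_1).
  assert (Hvn := normal_orthogonal_direction P n p v d Hn (HGP p HGp)
                   (HetaP d (conj (Rlt_le _ _ Hd) (Rle_refl d))) Hd).
  assert (Hpn1 := normal_orthogonal P1 n1 p Hn1 (HGP1 p HGp)).
  assert (Hun1 := normal_orthogonal_direction P1 n1 p u 1 Hn1 (HGP1 p HGp)
                    (HGP1 _ HGu1) Rlt_0_1).
  rewrite mdot_comm in Hu1vel.
  destruct (orthogonal_geod_and_vel p v d u1 Hqu1 Hu1vel) as [Hpu1 Hvu1].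
  rewrite ptransport_orthogonal in Hcos by exact Huv.
  assert (Hframe : orthonormal_frame p v u n)
    by (destruct Hn as [Hnn _]; rewrite mdot_comm in Huv; repeat split; assumption).
  pose proof (mdot_frame_expansion p v u n Hframe) as Hexp.
  destruct (proj1 (HG1u1 y1) HG1y1) as [s ->].
  pose proof (normal_orthogonal P1 n1 _ Hn1 HP1y1) as Hy1.
  rewrite mdot_geodl, mdot_geodl, Hpn1, (Hexp n1 u1) in Hy1.
  unfold dihedral_angle.
  apply (dihedral_bound (mdot n n1) (mdot v n1) (mdot n u1) s d theta Hd).
  - destruct Hn1 as [Hn1n1 _].
    rewrite (Hexp n1 n1), !(mdot_comm n1), Hpn1, Hun1 in Hn1n1; lra.
  - rewrite (Hexp u1 u1), !(mdot_comm u1), Hpu1, Hvu1, <- Hcos in Hu1u1; lra.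
  - rewrite !(mdot_comm u1), Hpu1, Hvu1, Hun1 in Hy1; lra.
Qed.
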